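(* Let $\alpha\in(0,1]$ and let $(c,\{n_{h,\bar h}\})$ be a unitary, modular invariant 2D CFT spectrum in the sense of the context, with central charge $c\geqslant 0$. Define the error term $$\mathcal{E}(\beta_L,\beta_R):=\log Z(\beta_L,\beta_R)-\frac{c}{24}(\beta_L+\beta_R).$$ Then for every $(\beta_L,\beta_R)\in\mathcal{D}_\alpha$ the algorithm $\mathsf{A}_\alpha$ (see context) started at $(\beta_L,\beta_R)$ is well defined and stops after a finite number $N$ of points $(\beta_L^{(1)},\beta_R^{(1)}),\dots,(\beta_L^{(N)},\beta_R^{(N)})$; these satisfy $\beta_L^{(i)}\beta_R^{(i)}>4\pi^2$ for $i=1,\dots,N-1$ and $\beta_L^{(N)},\beta_R^{(N)}>2\pi$; and $$\mathcal{E}(\beta_L,\beta_R)\leqslant\log\left[\sum_{i=1}^{N}\tilde Z_L\big(\alpha;\beta_L^{(i)},\beta_R^{(i)}\big)+\tilde Z_H\big(\alpha;\beta_L^{(N)},\beta_R^{(N)}\big)\right].$$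
   Context: A unitary, modular invariant 2D CFT spectrum consists of a real number $c\geqslant0$ (central charge) and a countable collection of pairs $(h,\bar h)$ with $h,\bar h\geqslant0$, each with a multiplicity $n_{h,\bar h}\in\mathbb{N}$, such that the torus partition function $$Z(\beta_L,\beta_R)=\sum_{h,\bar h}n_{h,\bar h}\,e^{-(h-\frac{c}{24})\beta_L-(\bar h-\frac{c}{24})\beta_R}$$ is finite for all $\beta_L,\beta_R\in(0,\infty)$ and satisfies $Z(\beta_L,\beta_R)=Z(4\pi^2/\beta_L,4\pi^2/\beta_R)$ ($h-\bar h$ need not be an integer). For $\alpha\in(0,1]$ define $$\tilde Z_L(\alpha;\beta_L,\beta_R)=\sum_{\min(h,\bar h)\leqslant\frac{\alpha c}{24}}n_{h,\bar h}e^{-h\beta_L-\bar h\beta_R},\qquad \tilde Z_H(\alpha;\beta_L,\beta_R)=\sum_{h,\bar h>\frac{\alpha c}{24}}n_{h,\bar h}e^{-h\beta_L-\bar h\beta_R}.$$ Let $\phi_\alpha(\beta)=\max\left\{\frac{4\pi^2}{\beta},\ \frac12\left(\alpha(4\pi-\beta)+\sqrt{\alpha^2(4\pi-\beta)^2+16\pi^2(1-\alpha)}\right)\right\}$ and $$\mathcal{D}_\alpha=\{(\beta_L,\beta_R):\ \beta_R>2\pi,\ \beta_L>\phi_\alpha(\beta_R)\}\cup\{(\beta_L,\beta_R):\ \beta_L>2\pi,\ \beta_R>\phi_\alpha(\beta_L)\}.$$ Algorithm $\mathsf{A}_\alpha$: set $(\beta_L^{(1)},\beta_R^{(1)})=(\beta_L,\beta_R)$.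 Given $(b_L,b_R)=(\beta_L^{(i)},\beta_R^{(i)})$: (1) if $b_L>2\pi$ and $b_R>2\pi$, stop and set $N=i$. (2) If $b_L\leqslant2\pi$: put $\tilde b_L=b_L$ if $b_L<2\pi$ and $\tilde b_L=\frac{8\pi^2}{\alpha(b_R-2\pi)+4\pi}$ if $b_L=2\pi$; let $t>0$ be the unique positive solution of $\alpha b_R+\tilde b_L-\frac{4\pi^2}{\tilde b_L}+(1-\alpha)\frac{4\pi^2}{t}-t=0$; set $(\beta_L^{(i+1)},\beta_R^{(i+1)})=(4\pi^2/\tilde b_L,\ t)$. (3) Otherwise ($b_L>2\pi$, $b_R\leqslant2\pi$): do the same with the roles of $L$ and $R$ exchanged, i.e. $\tilde b_R=b_R$ if $b_R<2\pi$, $\tilde b_R=\frac{8\pi^2}{\alpha(b_L-2\pi)+4\pi}$ if $b_R=2\pi$, $t>0$ the unique positive solution of $\alpha b_L+\tilde b_R-\frac{4\pi^2}{\tilde b_R}+(1-\alpha)\frac{4\pi^2}{t}-t=0$, and $(\beta_L^{(i+1)},\beta_R^{(i+1)})=(t,\ 4\pi^2/\tilde b_R)$. *)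

From Stdlib Require Import Reals Lra.
From Coquelicot Require Import Coquelicot.
Open Scope R_scope.

(* A spectrum is encoded by an index set nat: the k-th entry is the pair
   (h k, hb k) with multiplicity n k. *)

Definition Zpart (c : R) (h hb : nat -> R) (n : nat -> nat) (bL bR : R) : R :=
  Series (fun k => INR (n k) * exp (- (h k - c / 24) * bL - (hb k - c / 24) * bR)).

Definition cft_spectrum (c : R) (h hb : nat -> R) (n : nat -> nat) : Prop :=
  0 <= c /\
  (forall k, 0 <= h k /\ 0 <= hb k) /\
  (forall bL bR, 0 < bL -> 0 < bR ->
     ex_series (fun k => INR (n k) * exp (- (h k - c / 24) * bL - (hb k - c / 24) * bR))) /\
  (forall bL bR, 0 < bL -> 0 < bR ->
     Zpart c h hb n bL bR = Zpart c h hb n (4 * PI ^ 2 / bL) (4 * PI ^ 2 / bR)).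

Definition ZtL (c : R) (h hb : nat -> R) (n : nat -> nat) (alpha bL bR : R) : R :=
  Series (fun k => if Rle_dec (Rmin (h k) (hb k)) (alpha * c / 24)
                   then INR (n k) * exp (- h k * bL - hb k * bR) else 0).

Definition ZtH (c : R) (h hb : nat -> R) (n : nat -> nat) (alpha bL bR : R) : R :=
  Series (fun k => if Rlt_dec (alpha * c / 24) (h k) then
                     if Rlt_dec (alpha * c / 24) (hb k)
                     then INR (n k) * exp (- h k * bL - hb k * bR) else 0
                   else 0).

Definition Eerr (c : R) (h hb : nat -> R) (n : nat -> nat) (bL bR : R) : R :=
  ln (Zpart c h hb n bL bR) - c / 24 * (bL + bR).

Definition phi (alpha b : R) : R :=
  Rmax (4 * PI ^ 2 / b)
       ((alpha * (4 * PI - b)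
         + sqrt (alpha ^ 2 * (4 * PI - b) ^ 2 + 16 * PI ^ 2 * (1 - alpha))) / 2).

Definition in_D (alpha bL bR : R) : Prop :=
  (2 * PI < bR /\ phi alpha bR < bL) \/ (2 * PI < bL /\ phi alpha bL < bR).

(* tilde b for the coordinate b (<= 2 pi), other coordinate bo *)
Definition btilde (alpha b bo : R) : R :=
  if Rlt_dec b (2 * PI) then b
  else 8 * PI ^ 2 / (alpha * (bo - 2 * PI) + 4 * PI).

Definition step_eq (alpha x y t : R) : Prop :=
  alpha * x + y - 4 * PI ^ 2 / y + (1 - alpha) * (4 * PI ^ 2 / t) - t = 0.

Definition unique_pos_sol (alpha x y t : R) : Prop :=
  0 < t /\ step_eq alpha x y t /\
  (forall s, 0 < s -> step_eq alpha x y s -> s = t).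

Definition stops (b : R * R) : Prop := 2 * PI < fst b /\ 2 * PI < snd b.

Definition alg_step (alpha : R) (b b' : R * R) : Prop :=
  (fst b <= 2 * PI /\
   exists t, unique_pos_sol alpha (snd b) (btilde alpha (fst b) (snd b)) t /\
             b' = (4 * PI ^ 2 / btilde alpha (fst b) (snd b), t))
  \/
  (2 * PI < fst b /\ snd b <= 2 * PI /\
   exists t, unique_pos_sol alpha (fst b) (btilde alpha (snd b) (fst b)) t /\
             b' = (t, 4 * PI ^ 2 / btilde alpha (snd b) (fst b))).

Definition alg_run (alpha bL bR : R) (N : nat) (pts : nat -> R * R) : Prop :=
  (1 <= N)%nat /\ pts 1%nat = (bL, bR) /\
  (forall i, (1 <= i < N)%nat -> ~ stops (pts i) /\ alg_step alpha (pts i) (pts (S i))) /\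
  stops (pts N).

Fixpoint sum1 (f : nat -> R) (N : nat) : R :=
  match N with O => 0 | S m => sum1 f m + f (S m) end.

From Stdlib Require Import Reals Lra Lia.
From Coquelicot Require Import Coquelicot.
Open Scope R_scope.

(* Write Zt(bL, bR) = sum n e^(-h bL - hb bR) = e^(-c (bL + bR) / 24) Z, so that
   E = log Zt.  At each point of the run Zt = Zt_L + Zt_H, and the heavy part is
   dominated by Zt at the next point: lowering the temperatures from (p1, p2)
   to (q1, q2) costs at most e^(-alpha c (p1 - q1 + p2 - q2) / 24) on heavy
   states, modular invariance then moves (q1, q2) to (4 pi^2/q1, 4 pi^2/q2), and
   the step equation of the algorithm makes the total exponent
   -alpha c (b - btilde) / 24 <= 0.  Telescoping along the run gives the bound.
   The run terminates: while the small coordinate y stays below 2 pi, the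
   quantity alpha x + y - (1 - alpha) 4 pi^2 / y is conserved, and y grows at
   each step by an amount bounded below by the minimum of the concave function
   alpha (x y - 4 pi^2) of y on that level set. *)

Lemma exp_monotone x y : x <= y -> exp x <= exp y.
Proof.
  intros [Hlt | ->]; [left; apply exp_increasing, Hlt | right; reflexivity].
Qed.

Lemma ln_0 : ln 0 = 0.
Proof. unfold ln. destruct (Rlt_dec 0 0); [exfalso; lra | reflexivity]. Qed.

Lemma Series_zero (f : nat -> R) : (forall k, f k = 0) -> Series f = 0.
Proof.
  intros Hf. rewrite (Series_ext f (fun k => 0 * f k)) by (intros k; rewrite Hf; ring).
  rewrite Series_scal_l. ring.
Qed.

Lemma Series_ge0 (f : nat -> R) : (forall k, 0 <= f k) -> ex_series f -> 0 <= Series f.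
Proof.
  intros Hf Hex. rewrite <- (Series_zero (fun _ => 0)) by reflexivity.
  apply Series_le; [intros k; split; [lra | apply Hf] | exact Hex].
Qed.

Lemma Series_ge_term (f : nat -> R) k :
  (forall j, 0 <= f j) -> ex_series f -> f k <= Series f.
Proof.
  intros Hf Hex. rewrite (Series_incr_n f (S k)) by (lia || exact Hex). simpl pred.
  assert (Hsum : f k <= sum_f_R0 f k).
  { destruct k as [|k]; simpl; [lra|]. pose proof (cond_pos_sum f k Hf). lra. }
  pose proof (Series_ge0 (fun j => f (S k + j)%nat) (fun j => Hf _)
                (proj1 (ex_series_incr_n f (S k)) Hex)).
  lra.
Qed.

Lemma sum1_eq0 f N : (forall i, f i = 0) -> sum1 f N = 0.
Proof. intros Hf. induction N as [|N IH]; simpl; [reflexivity|]. rewrite IH, Hf. ring. Qed.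

Section PositiveRoot.

Variables K A : R.
Hypothesis A_ge0 : 0 <= A.

Lemma root_factor t z : 0 < t -> K + A / t - t = 0 ->
  z * z - K * z - A = (z - t) * (z + A / t).
Proof. intros Ht Et. replace K with (t - A / t) by lra. field. lra. Qed.

Lemma root_exists : 0 < A \/ 0 < K -> exists t, 0 < t /\ K + A / t - t = 0.
Proof.
  intros HAK.
  assert (Hdisc : 0 <= K * K + 4 * A) by nra.
  pose proof (sqrt_sqrt _ Hdisc) as HS. pose proof (sqrt_pos (K * K + 4 * A)) as HS0.
  set (S := sqrt (K * K + 4 * A)) in *.
  assert (Hpos : 0 < K + S).
  { destruct HAK; [|lra]. destruct (Rle_lt_dec (K + S) 0); [nra | lra]. }
  exists ((K + S) / 2). split; [lra|].
  assert (E : A = (K + S) / 2 * ((K + S) / 2 - K)) by nra.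
  rewrite E. field. lra.
Qed.

Lemma root_unique s t : 0 < s -> 0 < t ->
  K + A / s - s = 0 -> K + A / t - t = 0 -> s = t.
Proof.
  intros Hs Ht Es Et.
  pose proof (root_factor t s Ht Et) as F.
  replace (s * s - K * s - A) with (- s * (K + A / s - s)) in F by (field; lra).
  rewrite Es, Rmult_0_r in F.
  assert (0 <= A / t) by (apply Rdiv_le_0_compat; lra).
  destruct (Rmult_integral _ _ (eq_sym F)); lra.
Qed.

Lemma lt_root t z : 0 < t -> K + A / t - t = 0 -> z * z - K * z - A < 0 -> z < t.
Proof.
  intros Ht Et Hz. rewrite (root_factor t z Ht Et) in Hz.
  assert (0 <= A / t) by (apply Rdiv_le_0_compat; lra).
  nra.
Qed.

Lemma pos_above_root y : (K + sqrt (K * K + 4 * A)) / 2 < y -> 0 < y * y - K * y - A.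
Proof.
  intros Hy.
  assert (Hdisc : 0 <= K * K + 4 * A) by nra.
  pose proof (sqrt_sqrt _ Hdisc). pose proof (sqrt_pos (K * K + 4 * A)).
  nra.
Qed.

End PositiveRoot.

Lemma parabola_ge_endpoints b e u v y m : u <= y <= v ->
  m <= - (u * u - b * u + e) -> m <= - (v * v - b * v + e) ->
  m <= - (y * y - b * y + e).
Proof.
  intros [Huy Hyv] Hu Hv.
  destruct (Req_dec u v) as [<-|Huv]; [replace y with u by lra; exact Hu|].
  assert (Hid : (v - u) * (- (y * y - b * y + e) - m) =
                (v - y) * (- (u * u - b * u + e) - m) + (y - u) * (- (v * v - b * v + e) - m)
                + (v - u) * (y - u) * (v - y)) by ring.
  assert (0 <= (v - u) * (y - u) * (v - y)) by (apply Rmult_le_pos; [apply Rmult_le_pos|]; lra).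
  assert (0 <= (v - y) * (- (u * u - b * u + e) - m)) by (apply Rmult_le_pos; lra).
  assert (0 <= (y - u) * (- (v * v - b * v + e) - m)) by (apply Rmult_le_pos; lra).
  nra.
Qed.

(** * The step equation *)

Lemma step_eq_root a x y t : step_eq a x y t <->
  (a * x + y - 4 * PI ^ 2 / y) + (1 - a) * (4 * PI ^ 2) / t - t = 0.
Proof.
  unfold step_eq.
  replace ((1 - a) * (4 * PI ^ 2) / t) with ((1 - a) * (4 * PI ^ 2 / t)) by (unfold Rdiv; ring).
  tauto.
Qed.

Lemma step_sol_exists a x y : 0 < a <= 1 -> 0 < y -> 4 * PI ^ 2 < y * x ->
  exists t, unique_pos_sol a x y t.
Proof.
  intros Ha Hy Hyx. pose proof PI_RGT_0. pose proof (pow_lt PI 2 PI_RGT_0).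
  assert (HA : 0 <= (1 - a) * (4 * PI ^ 2)) by nra.
  assert (HAK : 0 < (1 - a) * (4 * PI ^ 2) \/ 0 < a * x + y - 4 * PI ^ 2 / y).
  { destruct (Rlt_dec a 1); [left; nra | right].
    assert (4 * PI ^ 2 / y < x) by (apply <- Rlt_div_l; nra).
    replace a with 1 by lra. lra. }
  destruct (root_exists _ _ HA HAK) as (t & Ht & Et).
  exists t. split; [exact Ht|]. split; [exact (proj2 (step_eq_root a x y t) Et)|].
  intros s Hs Es. apply step_eq_root in Es. exact (root_unique _ _ HA s t Hs Ht Es Et).
Qed.

(* The last hypothesis says that [z^2 - (a x + y - 4 pi^2/y) z - (1 - a) 4 pi^2],
   whose positive root is the solution [t], is negative at [z]. *)
Lemma step_sol_gt a x y t z : 0 < a <= 1 -> 0 < y -> 0 < t -> step_eq a x y t ->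
  (z - y) * (z + 4 * PI ^ 2 / y) < a * (x * z - 4 * PI ^ 2) -> z < t.
Proof.
  intros Ha Hy Ht Et Hz. apply step_eq_root in Et. pose proof PI_RGT_0.
  assert (HA : 0 <= (1 - a) * (4 * PI ^ 2)) by nra.
  apply (lt_root _ _ HA t z Ht Et).
  enough (E : z * z - (a * x + y - 4 * PI ^ 2 / y) * z - (1 - a) * (4 * PI ^ 2)
              = (z - y) * (z + 4 * PI ^ 2 / y) - a * (x * z - 4 * PI ^ 2)) by lra.
  field. lra.
Qed.

Lemma step_sol_bounds a x y t : 0 < a <= 1 -> 0 < y -> 4 * PI ^ 2 < y * x ->
  0 < t -> step_eq a x y t -> 4 * PI ^ 2 / x < t /\ y < t.
Proof.
  intros Ha Hy Hyx Ht Et. pose proof PI_RGT_0.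
  assert (Hx : 0 < x) by nra.
  split; apply (step_sol_gt a x y t); auto.
  - assert (4 * PI ^ 2 / x < y) by (apply <- Rlt_div_l; nra).
    assert (0 < 4 * PI ^ 2 / x) by (apply Rdiv_lt_0_compat; nra).
    assert (0 < 4 * PI ^ 2 / y) by (apply Rdiv_lt_0_compat; nra).
    replace (x * (4 * PI ^ 2 / x)) with (4 * PI ^ 2) by (field; lra).
    nra.
  - replace (y - y) with 0 by ring. nra.
Qed.

Definition invariant a y x := a * x + y - (1 - a) * (4 * PI ^ 2) / y.

Lemma step_invariant a x y t : 0 < y -> 0 < t -> step_eq a x y t ->
  invariant a t (4 * PI ^ 2 / y) = invariant a y x.
Proof. intros Hy Ht Et. apply step_eq_root in Et. unfold invariant, Rdiv in *. lra. Qed.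

Lemma step_gain a x y t : 0 < y -> 0 < t -> step_eq a x y t ->
  (t - y) * (t * y + (1 - a) * (4 * PI ^ 2)) = a * (x * y - 4 * PI ^ 2) * t.
Proof.
  intros Hy Ht Et. unfold step_eq in Et.
  transitivity (a * (x * y - 4 * PI ^ 2) * t
                - t * y * (a * x + y - 4 * PI ^ 2 / y + (1 - a) * (4 * PI ^ 2 / t) - t)).
  - field. lra.
  - rewrite Et. ring.
Qed.

Lemma btilde_id a y x : y < 2 * PI -> btilde a y x = y.
Proof. intros Hy. unfold btilde. destruct (Rlt_dec y (2 * PI)); [reflexivity | contradiction]. Qed.

Lemma btilde_2pi a x : btilde a (2 * PI) x = 8 * PI ^ 2 / (a * (x - 2 * PI) + 4 * PI).
Proof. unfold btilde. destruct (Rlt_dec (2 * PI) (2 * PI)); [lra | reflexivity]. Qed.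

Lemma btilde_bounds a y x : 0 < a <= 1 -> 0 < y <= 2 * PI -> 2 * PI < x ->
  4 * PI ^ 2 < y * x ->
  0 < btilde a y x <= y /\ 4 * PI ^ 2 < btilde a y x * x /\ 2 * PI < 4 * PI ^ 2 / btilde a y x.
Proof.
  intros Ha Hy Hx Hyx. pose proof PI_RGT_0. pose proof (pow_lt PI 2 PI_RGT_0).
  destruct (Rlt_le_dec y (2 * PI)) as [Hlt|Hge].
  { rewrite btilde_id by exact Hlt. split; [lra|]. split; [lra|]. apply -> Rlt_div_r; nra. }
  replace y with (2 * PI) by lra. rewrite btilde_2pi.
  set (d := a * (x - 2 * PI)). assert (Hd : 0 < d) by (unfold d; nra).
  split; [split|split].
  - apply Rdiv_lt_0_compat; nra.
  - apply <- Rle_div_l; nra.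
  - replace (8 * PI ^ 2 / (d + 4 * PI) * x) with (8 * PI ^ 2 * x / (d + 4 * PI)) by (field; lra).
    apply -> Rlt_div_r; [|lra]. unfold d.
    assert (0 < PI ^ 2 * ((2 - a) * (x - 2 * PI))).
    { apply Rmult_lt_0_compat; [nra | apply Rmult_lt_0_compat; lra]. }
    nra.
  - replace (4 * PI ^ 2 / (8 * PI ^ 2 / (d + 4 * PI))) with ((d + 4 * PI) / 2) by (field; lra).
    lra.
Qed.

(* The choice of [btilde] at [b = 2 pi] is what makes the next point stop. *)
Lemma btilde_2pi_sol_gt a x t : 0 < a <= 1 -> 2 * PI < x -> 0 < t ->
  step_eq a x (btilde a (2 * PI) x) t -> 2 * PI < t.
Proof.
  intros Ha Hx Ht Et. pose proof PI_RGT_0.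
  rewrite btilde_2pi in Et. set (d := a * (x - 2 * PI)) in Et.
  assert (Hd : 0 < d) by (unfold d; nra).
  set (bt := 8 * PI ^ 2 / (d + 4 * PI)) in Et.
  assert (Hbt : 0 < bt) by (unfold bt; apply Rdiv_lt_0_compat; nra).
  apply (step_sol_gt a x bt t (2 * PI) Ha Hbt Ht Et).
  replace ((2 * PI - bt) * (2 * PI + 4 * PI ^ 2 / bt))
    with (PI * d * (d + 8 * PI) / (d + 4 * PI)) by (unfold bt; field; lra).
  replace (a * (x * (2 * PI) - 4 * PI ^ 2)) with (2 * PI * d) by (unfold d; ring).
  apply <- Rlt_div_l; [|lra].
  assert (0 < PI * (d * d)) by (apply Rmult_lt_0_compat; nra).
  nra.
Qed.

(* Exponent gained on one coordinate by lowering [p] to [q] on heavy states and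
   then applying the modular transformation [q -> 4 pi^2 / q]. *)
Definition modular_exponent a p q := 4 * PI ^ 2 / q - q - a * (p - q).

Lemma step_exponent_nonpos a y x t : 0 < a <= 1 -> 0 < y <= 2 * PI -> 2 * PI < x ->
  4 * PI ^ 2 < y * x -> unique_pos_sol a x (btilde a y x) t ->
  0 < btilde a y x <= y /\ 0 < 4 * PI ^ 2 / t <= x /\
  modular_exponent a y (btilde a y x) + modular_exponent a x (4 * PI ^ 2 / t) <= 0.
Proof.
  intros Ha Hy Hx Hyx (Ht & Et & _). pose proof PI_RGT_0.
  destruct (btilde_bounds a y x Ha Hy Hx Hyx) as (Hbt & Hbtx & _).
  destruct (step_sol_bounds a x (btilde a y x) t Ha ltac:(lra) Hbtx Ht Et) as [Htx _].
  set (bt := btilde a y x) in *.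
  split; [exact Hbt|]. split.
  - split; [apply Rdiv_lt_0_compat; nra|].
    apply Rlt_div_l in Htx; [|lra]. apply <- Rle_div_l; nra.
  - unfold modular_exponent, step_eq in *.
    replace (4 * PI ^ 2 / (4 * PI ^ 2 / t)) with t by (field; lra).
    assert (0 <= a * (y - bt)) by (apply Rmult_le_pos; lra).
    lra.
Qed.

(** * Runs of the algorithm *)

Section Runs.

Variables (State : Type) (step : State -> State -> Prop) (stop good : State -> Prop).

Definition run_within (N : nat) (pts : nat -> State) : Prop :=
  (1 <= N)%nat /\
  (forall i, (1 <= i < N)%nat -> good (pts i) /\ step (pts i) (pts (S i))) /\
  stop (pts N).

Definition runs_from (s : State) : Prop :=
  exists N pts, pts 1%nat = s /\ run_within N pts.

Lemma runs_from_stop s : stop s -> runs_from s.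
Proof.
  intros Hs. exists 1%nat, (fun _ => s). split; [reflexivity|].
  split; [lia|]. split; [intros; lia | exact Hs].
Qed.

Lemma runs_from_step s s' : good s -> step s s' -> runs_from s' -> runs_from s.
Proof.
  intros Hg Hs (N & pts & H1 & HN & Hsteps & Hstop).
  exists (S N), (fun i => match i with S (S j) => pts (S j) | _ => s end).
  split; [reflexivity|]. split; [lia|]. split.
  - intros [|[|i]] Hi; [lia | rewrite H1; auto | apply (Hsteps (S i)); lia].
  - destruct N as [|N]; [lia | exact Hstop].
Qed.

Lemma runs_from_of_progress (f : State -> R) (B delta : R) : 0 < delta ->
  (forall s, good s -> f s <= B) ->
  (forall s, good s -> exists s', step s s' /\ (stop s' \/ good s' /\ f s + delta <= f s')) ->
  forall s, good s -> runs_from s.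
Proof.
  intros Hdelta Hbound Hprogress.
  assert (Hind : forall (M : nat) s, good s -> B - f s < INR M * delta -> runs_from s).
  { induction M as [|M IH]; intros s Hg Hdist.
    - pose proof (Hbound s Hg). simpl in Hdist. lra.
    - destruct (Hprogress s Hg) as (s' & Hstep & [Hstop|[Hg' Hf]]);
        apply (runs_from_step s s' Hg Hstep).
      + exact (runs_from_stop s' Hstop).
      + apply IH; [exact Hg'|]. rewrite S_INR in Hdist. lra. }
  intros s Hg. destruct (INR_archimed delta (B - f s) Hdelta) as [M HM].
  apply (Hind M s Hg). lra.
Qed.

End Runs.

Arguments run_within {State}.
Arguments runs_from {State}.

Lemma runs_from_weaken {State : Type} (step : State -> State -> Prop)
  (stop good good' : State -> Prop) s :
  (forall q, good q -> good' q) -> runs_from step stop good s -> runs_from step stop good' s.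
Proof.
  intros Hgood (N & pts & H1 & HN & Hsteps & Hstop).
  exists N, pts. split; [exact H1|]. split; [exact HN|]. split; [|exact Hstop].
  intros i Hi. destruct (Hsteps i Hi). auto.
Qed.

(* A point with small coordinate [y] and large coordinate [x]; [o] tells whether
   the small one is [bL]. *)
Definition orient (o : bool) (y x : R) : R * R := if o then (y, x) else (x, y).

Definition regular (p : R * R) : Prop :=
  ~ stops p /\ 0 < fst p /\ 0 < snd p /\ 4 * PI ^ 2 < fst p * snd p.

Lemma stops_orient o y x : 2 * PI < y -> 2 * PI < x -> stops (orient o y x).
Proof. destruct o; unfold stops; simpl; lra. Qed.

Lemma regular_orient o y x : 0 < y <= 2 * PI -> 2 * PI < x -> 4 * PI ^ 2 < y * x ->
  regular (orient o y x).
Proof. intros. destruct o; unfold regular, stops; simpl; repeat split; nra. Qed.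

Lemma Rmin_orient o y x : y <= x -> Rmin (fst (orient o y x)) (snd (orient o y x)) = y.
Proof.
  intros Hyx. destruct o; simpl; [apply Rmin_left | apply Rmin_right]; exact Hyx.
Qed.

Lemma alg_step_orient a o y x t : y <= 2 * PI -> 2 * PI < x ->
  unique_pos_sol a x (btilde a y x) t ->
  alg_step a (orient o y x) (orient (negb o) t (4 * PI ^ 2 / btilde a y x)).
Proof.
  intros Hy Hx Ht. destruct o; simpl.
  - left. split; [exact Hy|]. exists t. split; [exact Ht | reflexivity].
  - right. split; [exact Hx|]. split; [exact Hy|]. exists t. split; [exact Ht | reflexivity].
Qed.

Definition excess a I y := - (y * y - I * y + (2 * a - 1) * (4 * PI ^ 2)).

Lemma excess_invariant a y x : 0 < y ->
  excess a (invariant a y x) y = a * (x * y - 4 * PI ^ 2).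
Proof. intros Hy. unfold excess, invariant. field. lra. Qed.

Section Termination.

Variables a y1 I0 : R.
Hypotheses (Ha : 0 < a <= 1) (Hy1 : 0 < y1).
Hypotheses (excess_y1 : 0 < excess a I0 y1) (excess_2pi : 0 < excess a I0 (2 * PI)).

Definition admissible (p : R * R) : Prop :=
  exists o y x, p = orient o y x /\ y1 <= y <= 2 * PI /\ 2 * PI < x /\
    4 * PI ^ 2 < y * x /\ invariant a y x = I0.

Let rate := Rmin (excess a I0 y1) (excess a I0 (2 * PI)) / (2 * PI + 4 * PI ^ 2 / y1).

Lemma rate_pos : 0 < rate.
Proof.
  pose proof PI_RGT_0. apply Rdiv_lt_0_compat; [apply Rmin_glb_lt; assumption|].
  assert (0 < 4 * PI ^ 2 / y1) by (apply Rdiv_lt_0_compat; nra). lra.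
Qed.

Lemma small_coord_gain y x t : y1 <= y <= 2 * PI -> 4 * PI ^ 2 < y * x ->
  invariant a y x = I0 -> 0 < t -> step_eq a x y t -> rate <= t - y.
Proof.
  intros Hy Hyx Hinv Ht Et. pose proof PI_RGT_0.
  destruct (step_sol_bounds a x y t Ha ltac:(lra) Hyx Ht Et) as [_ Hyt].
  set (m := Rmin (excess a I0 y1) (excess a I0 (2 * PI))).
  assert (Hm : m <= a * (x * y - 4 * PI ^ 2)).
  { rewrite <- excess_invariant, Hinv by lra.
    apply (parabola_ge_endpoints _ _ y1 (2 * PI)); [lra | apply Rmin_l | apply Rmin_r]. }
  pose proof (step_gain a x y t ltac:(lra) Ht Et) as Hgain.
  set (D := 2 * PI + 4 * PI ^ 2 / y1).
  assert (HD : t * y + (1 - a) * (4 * PI ^ 2) <= t * D).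
  { assert (1 <= t / y1) by (apply -> Rle_div_r; lra).
    replace (t * D) with (2 * PI * t + 4 * PI ^ 2 * (t / y1)) by (unfold D; field; lra).
    nra. }
  assert (m * t <= a * (x * y - 4 * PI ^ 2) * t) by (apply Rmult_le_compat_r; lra).
  assert ((t - y) * (t * y + (1 - a) * (4 * PI ^ 2)) <= (t - y) * (t * D))
    by (apply Rmult_le_compat_l; lra).
  assert (0 < D) by (unfold D; assert (0 < 4 * PI ^ 2 / y1) by (apply Rdiv_lt_0_compat; nra); lra).
  unfold rate. change (m / D <= t - y). apply <- Rle_div_l; [|lra].
  apply (Rmult_le_reg_r t); [exact Ht|]. lra.
Qed.

Lemma admissible_progress p : admissible p ->
  exists p', alg_step a p p' /\
    (stops p' \/ admissible p' /\ Rmin (fst p) (snd p) + rate <= Rmin (fst p') (snd p')).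
Proof.
  intros (o & y & x & -> & Hy & Hx & Hyx & Hinv).
  pose proof PI_RGT_0. pose proof (pow_lt PI 2 PI_RGT_0).
  destruct (btilde_bounds a y x Ha ltac:(lra) Hx Hyx) as (Hbt & Hbtx & Hbt2pi).
  destruct (step_sol_exists a x (btilde a y x) Ha ltac:(lra) Hbtx) as [t Ht].
  exists (orient (negb o) t (4 * PI ^ 2 / btilde a y x)).
  split; [apply alg_step_orient; [lra | lra | exact Ht]|].
  destruct Ht as (Ht & Et & _).
  assert (Hstop : 2 * PI < t -> stops (orient (negb o) t (4 * PI ^ 2 / btilde a y x)))
    by (intros; apply stops_orient; lra).
  destruct (Req_dec y (2 * PI)) as [->|Hy2pi].
  { left. apply Hstop, (btilde_2pi_sol_gt a x t Ha Hx Ht Et). }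
  destruct (Rlt_le_dec (2 * PI) t) as [Ht2pi|Ht2pi]; [left; auto | right].
  rewrite btilde_id in * by lra.
  destruct (step_sol_bounds a x y t Ha ltac:(lra) Hyx Ht Et) as [_ Hyt].
  pose proof (small_coord_gain y x t Hy Hyx Hinv Ht Et).
  rewrite !Rmin_orient by lra.
  split; [|lra].
  exists (negb o), t, (4 * PI ^ 2 / y). split; [reflexivity|].
  split; [lra|]. split; [lra|]. split.
  - replace (t * (4 * PI ^ 2 / y)) with (4 * PI ^ 2 * (t / y)) by (field; lra).
    assert (1 < t / y) by (apply -> Rlt_div_r; lra).
    nra.
  - rewrite (step_invariant a x y t) by (assumption || lra). exact Hinv.
Qed.

Lemma runs_from_admissible p : admissible p -> runs_from (alg_step a) stops regular p.
Proof.
  intros Hp. apply (runs_from_weaken _ _ admissible).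
  { intros q (o & y & x & -> & Hy & Hx & Hyx & _). apply regular_orient; lra. }
  apply (runs_from_of_progress _ _ _ _ (fun q => Rmin (fst q) (snd q)) (2 * PI) rate rate_pos);
    [| exact admissible_progress | exact Hp].
  intros q (o & y & x & -> & Hy & Hx & _). rewrite Rmin_orient by lra. lra.
Qed.

End Termination.

Lemma phi_lt a y x : 0 < a <= 1 -> 2 * PI < x -> phi a x < y ->
  4 * PI ^ 2 < y * x /\ 0 < excess a (invariant a y x) (2 * PI).
Proof.
  intros Ha Hx Hphi. pose proof PI_RGT_0. unfold phi in Hphi.
  pose proof (Rle_lt_trans _ _ _ (Rmax_l _ _) Hphi) as Hprod.
  pose proof (Rle_lt_trans _ _ _ (Rmax_r _ _) Hphi) as Hroot.
  apply Rlt_div_l in Hprod; [|lra].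
  assert (Hy : 0 < y) by nra.
  split; [lra|].
  set (B := a * (4 * PI - x)). set (A := (1 - a) * (4 * PI ^ 2)).
  assert (HA : 0 <= A) by (unfold A; nra).
  replace (a ^ 2 * (4 * PI - x) ^ 2 + 16 * PI ^ 2 * (1 - a)) with (B * B + 4 * A) in Hroot
    by (unfold A, B; ring).
  pose proof (pos_above_root B A HA y Hroot).
  replace (excess a (invariant a y x) (2 * PI)) with (2 * PI * (y * y - B * y - A) / y)
    by (unfold excess, invariant, A, B; field; lra).
  apply Rdiv_lt_0_compat; nra.
Qed.

Lemma runs_from_oriented a o y x : 0 < a <= 1 -> 2 * PI < x -> phi a x < y ->
  runs_from (alg_step a) stops regular (orient o y x).
Proof.
  intros Ha Hx Hphi. pose proof PI_RGT_0.
  destruct (phi_lt a y x Ha Hx Hphi) as [Hyx Hexc].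
  assert (Hy : 0 < y) by nra.
  destruct (Rlt_le_dec (2 * PI) y) as [Hy2pi|Hy2pi].
  - apply runs_from_stop, stops_orient; lra.
  - apply (runs_from_admissible a y (invariant a y x)); try assumption.
    + rewrite excess_invariant by lra. nra.
    + exists o, y, x. repeat split; lra.
Qed.

Lemma runs_from_D a bL bR : 0 < a <= 1 -> in_D a bL bR ->
  runs_from (alg_step a) stops regular (bL, bR).
Proof.
  intros Ha [[HR HL]|[HL HR]].
  - exact (runs_from_oriented a true bL bR Ha HR HL).
  - exact (runs_from_oriented a false bR bL Ha HL HR).
Qed.

Lemma in_D_pos a bL bR : in_D a bL bR -> 0 < bL /\ 0 < bR.
Proof.
  pose proof PI_RGT_0.
  assert (Hphi : forall b, 0 < b -> 0 < phi a b).
  { intros b Hb. unfold phi. eapply Rlt_le_trans; [|apply Rmax_l].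
    apply Rdiv_lt_0_compat; nra. }
  intros [[HR HL]|[HL HR]]; [pose proof (Hphi bR) | pose proof (Hphi bL)]; split; lra.
Qed.

(** * The partition function along a run *)

Section Spectrum.

Variables (c : R) (h hb : nat -> R) (n : nat -> nat).

Definition zt (bL bR : R) (k : nat) : R := INR (n k) * exp (- h k * bL - hb k * bR).

Definition Zt (bL bR : R) : R := Series (zt bL bR).

Lemma zt_ge0 bL bR k : 0 <= zt bL bR k.
Proof. unfold zt. apply Rmult_le_pos; [apply pos_INR | left; apply exp_pos]. Qed.

Lemma Zpart_term_zt bL bR k :
  INR (n k) * exp (- (h k - c / 24) * bL - (hb k - c / 24) * bR)
  = exp (c / 24 * (bL + bR)) * zt bL bR k.
Proof.
  unfold zt. rewrite <- Rmult_assoc, (Rmult_comm (exp _)), Rmult_assoc, <- exp_plus.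
  f_equal. f_equal. ring.
Qed.

Lemma Zpart_Zt bL bR : Zpart c h hb n bL bR = exp (c / 24 * (bL + bR)) * Zt bL bR.
Proof.
  unfold Zpart, Zt. rewrite <- Series_scal_l. apply Series_ext. apply Zpart_term_zt.
Qed.

Lemma ZtL_empty a bL bR : (forall k, n k = 0%nat) -> ZtL c h hb n a bL bR = 0.
Proof.
  intros Hn. apply Series_zero. intros k. rewrite Hn, INR_0.
  destruct (Rle_dec _ _); ring.
Qed.

Lemma ZtH_empty a bL bR : (forall k, n k = 0%nat) -> ZtH c h hb n a bL bR = 0.
Proof.
  intros Hn. apply Series_zero. intros k. rewrite Hn, INR_0.
  destruct (Rlt_dec _ _); [destruct (Rlt_dec _ _)|]; ring.
Qed.

Hypothesis spec : cft_spectrum c h hb n.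

Lemma ex_series_zt bL bR : 0 < bL -> 0 < bR -> ex_series (zt bL bR).
Proof.
  intros HL HR. destruct spec as (_ & _ & Hex & _).
  apply (ex_series_ext (fun k => exp (- (c / 24 * (bL + bR))) *
           (INR (n k) * exp (- (h k - c / 24) * bL - (hb k - c / 24) * bR)))).
  - intros k. rewrite Zpart_term_zt, <- Rmult_assoc, <- exp_plus, Rplus_opp_l, exp_0.
    apply Rmult_1_l.
  - exact (ex_series_scal_l _ _ (Hex bL bR HL HR)).
Qed.

Lemma Zt_ge0 bL bR : 0 < bL -> 0 < bR -> 0 <= Zt bL bR.
Proof. intros. apply Series_ge0; [apply zt_ge0 | apply ex_series_zt; assumption]. Qed.

Lemma spectrum_empty_of_Zt_eq0 bL bR : 0 < bL -> 0 < bR -> Zt bL bR = 0 ->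
  forall k, n k = 0%nat.
Proof.
  intros HL HR HZ k.
  pose proof (Series_ge_term _ k (zt_ge0 bL bR) (ex_series_zt bL bR HL HR)) as Hk.
  fold (Zt bL bR) in Hk. pose proof (zt_ge0 bL bR k). unfold zt in *.
  pose proof (exp_pos (- h k * bL - hb k * bR)).
  apply INR_eq. rewrite INR_0. nra.
Qed.

Lemma Zt_split a bL bR : 0 < bL -> 0 < bR ->
  Zt bL bR = ZtL c h hb n a bL bR + ZtH c h hb n a bL bR.
Proof.
  intros HL HR. unfold ZtL, ZtH, Zt.
  assert (Hdom : forall f : nat -> R, (forall k, f k = 0 \/ f k = zt bL bR k) -> ex_series f).
  { intros f Hf. apply (ex_series_le f (zt bL bR)); [|apply ex_series_zt; assumption].
    intros k. change (norm (f k)) with (Rabs (f k)). pose proof (zt_ge0 bL bR k).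
    destruct (Hf k) as [-> | ->]; [rewrite Rabs_R0 | rewrite Rabs_pos_eq]; lra. }
  rewrite <- Series_plus.
  - apply Series_ext. intros k. unfold zt, Rmin.
    destruct (Rle_dec (h k) (hb k)), (Rle_dec _ _), (Rlt_dec _ (h k));
      try destruct (Rlt_dec _ (hb k)); first [ring | lra].
  - apply Hdom. intros k. destruct (Rle_dec _ _); auto.
  - apply Hdom. intros k. destruct (Rlt_dec _ _); [destruct (Rlt_dec _ _)|]; auto.
Qed.

Lemma Zt_modular q1 q2 : 0 < q1 -> 0 < q2 ->
  Zt q1 q2 = exp (c / 24 * ((4 * PI ^ 2 / q1 - q1) + (4 * PI ^ 2 / q2 - q2)))
             * Zt (4 * PI ^ 2 / q1) (4 * PI ^ 2 / q2).
Proof.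
  intros H1 H2. destruct spec as (_ & _ & _ & Hmod).
  pose proof (Hmod q1 q2 H1 H2) as E. rewrite !Zpart_Zt in E.
  apply (Rmult_eq_reg_l (exp (c / 24 * (q1 + q2)))); [|apply Rgt_not_eq, exp_pos].
  rewrite E, <- Rmult_assoc, <- exp_plus. f_equal. f_equal. ring.
Qed.

Lemma ZtH_le_Zt a p1 p2 q1 q2 : 0 < q1 <= p1 -> 0 < q2 <= p2 ->
  ZtH c h hb n a p1 p2 <= exp (- (a * c / 24) * ((p1 - q1) + (p2 - q2))) * Zt q1 q2.
Proof.
  intros [Hq1 Hp1] [Hq2 Hp2]. unfold ZtH, Zt. rewrite <- Series_scal_l.
  apply Series_le; [|exact (ex_series_scal_l _ _ (ex_series_zt q1 q2 Hq1 Hq2))].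
  intros k. pose proof (zt_ge0 p1 p2 k). pose proof (zt_ge0 q1 q2 k).
  pose proof (exp_pos (- (a * c / 24) * ((p1 - q1) + (p2 - q2)))).
  unfold zt in *.
  destruct (Rlt_dec _ (h k)) as [Hh|]; [destruct (Rlt_dec _ (hb k)) as [Hhb|]|];
    split; try nra.
  rewrite (Rmult_comm (exp _)), Rmult_assoc, <- exp_plus.
  apply Rmult_le_compat_l; [apply pos_INR|]. apply exp_monotone.
  assert (a * c / 24 * (p1 - q1) <= h k * (p1 - q1)) by (apply Rmult_le_compat_r; lra).
  assert (a * c / 24 * (p2 - q2) <= hb k * (p2 - q2)) by (apply Rmult_le_compat_r; lra).
  lra.
Qed.

Lemma ZtH_le_dual a p1 p2 q1 q2 : 0 < q1 <= p1 -> 0 < q2 <= p2 ->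
  modular_exponent a p1 q1 + modular_exponent a p2 q2 <= 0 ->
  ZtH c h hb n a p1 p2 <= Zt (4 * PI ^ 2 / q1) (4 * PI ^ 2 / q2).
Proof.
  intros Hq1 Hq2 Hexp. pose proof PI_RGT_0.
  assert (Hc : 0 <= c) by apply spec.
  eapply Rle_trans; [apply (ZtH_le_Zt a p1 p2 q1 q2 Hq1 Hq2)|].
  rewrite Zt_modular, <- Rmult_assoc, <- exp_plus by lra.
  rewrite <- (Rmult_1_l (Zt (4 * PI ^ 2 / q1) (4 * PI ^ 2 / q2))) at 2.
  apply Rmult_le_compat_r; [apply Zt_ge0; apply Rdiv_lt_0_compat; nra|].
  rewrite <- exp_0. apply exp_monotone.
  assert (0 <= c / 24 * - (modular_exponent a p1 q1 + modular_exponent a p2 q2))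
    by (apply Rmult_le_pos; lra).
  unfold modular_exponent in *. lra.
Qed.

Lemma ZtH_le_next a b b' : 0 < a <= 1 -> regular b -> alg_step a b b' ->
  ZtH c h hb n a (fst b) (snd b) <= Zt (fst b') (snd b').
Proof.
  intros Ha Hreg Hstep. pose proof PI_RGT_0. destruct b as [p1 p2].
  destruct Hreg as (_ & H1 & H2 & Hprod). cbn [fst snd] in *.
  destruct Hstep as [(Hle & t & Ht & ->) | (Hgt & Hle & t & Ht & ->)]; cbn [fst snd] in *.
  - destruct (step_exponent_nonpos a p1 p2 t Ha ltac:(lra) ltac:(nra) Hprod Ht)
      as (Hq1 & Hq2 & Hexp).
    replace t with (4 * PI ^ 2 / (4 * PI ^ 2 / t)) by (destruct Ht; field; lra).
    exact (ZtH_le_dual a p1 p2 _ _ Hq1 Hq2 Hexp).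
  - destruct (step_exponent_nonpos a p2 p1 t Ha ltac:(lra) Hgt ltac:(nra) Ht)
      as (Hq2 & Hq1 & Hexp).
    replace t with (4 * PI ^ 2 / (4 * PI ^ 2 / t)) by (destruct Ht; field; lra).
    apply (ZtH_le_dual a p1 p2 _ _ Hq1 Hq2). lra.
Qed.

Lemma Zt_le_run a N pts : 0 < a <= 1 -> run_within (alg_step a) stops regular N pts ->
  Zt (fst (pts 1%nat)) (snd (pts 1%nat)) <=
  sum1 (fun i => ZtL c h hb n a (fst (pts i)) (snd (pts i))) N
  + ZtH c h hb n a (fst (pts N)) (snd (pts N)).
Proof.
  intros Ha (HN & Hsteps & Hstop). pose proof PI_RGT_0.
  set (light i := ZtL c h hb n a (fst (pts i)) (snd (pts i))).
  set (heavy i := ZtH c h hb n a (fst (pts i)) (snd (pts i))).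
  set (full i := Zt (fst (pts i)) (snd (pts i))).
  assert (Hsplit : forall i, (1 <= i <= N)%nat -> full i = light i + heavy i).
  { intros i Hi. apply Zt_split; destruct (Nat.eq_dec i N) as [->|Hne];
      solve [ destruct Hstop; lra
            | destruct (Hsteps i ltac:(lia)) as [(_ & ? & ? & _) _]; assumption ]. }
  assert (Hchain : forall k, (S k <= N)%nat -> full 1%nat <= sum1 light k + full (S k)).
  { induction k as [|k IH]; intros Hk; simpl sum1; [lra|].
    destruct (Hsteps (S k) ltac:(lia)) as [Hreg Hstep].
    pose proof (ZtH_le_next a _ _ Ha Hreg Hstep).
    pose proof (Hsplit (S k) ltac:(lia)). specialize (IH ltac:(lia)).
    unfold full, heavy, light in *. lra. }
  destruct N as [|N]; [lia|].
  pose proof (Hchain N ltac:(lia)). pose proof (Hsplit (S N) ltac:(lia)).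
  simpl sum1. unfold full, heavy, light in *. lra.
Qed.

(* When [Zt] vanishes the spectrum is empty and both sides are computed through
   the junk value [ln 0 = 0]. *)
Lemma Eerr_le_run a bL bR N pts : 0 < a <= 1 -> 0 < bL -> 0 < bR ->
  pts 1%nat = (bL, bR) -> run_within (alg_step a) stops regular N pts ->
  Eerr c h hb n bL bR <=
  ln (sum1 (fun i => ZtL c h hb n a (fst (pts i)) (snd (pts i))) N
      + ZtH c h hb n a (fst (pts N)) (snd (pts N))).
Proof.
  intros Ha HL HR Hstart Hrun.
  pose proof (Zt_le_run a N pts Ha Hrun) as Hle. rewrite Hstart in Hle. simpl in Hle.
  assert (Hc : 0 <= c) by apply spec.
  unfold Eerr. rewrite Zpart_Zt.
  destruct (Rle_lt_or_eq_dec _ _ (Zt_ge0 bL bR HL HR)) as [Hpos|Hzero].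
  - rewrite ln_mult, ln_exp by (apply exp_pos || exact Hpos).
    pose proof (ln_le _ _ Hpos Hle). lra.
  - pose proof (spectrum_empty_of_Zt_eq0 bL bR HL HR (eq_sym Hzero)) as Hempty.
    rewrite <- Hzero, Rmult_0_r, ZtH_empty, sum1_eq0, Rplus_0_r, ln_0 by
      (exact Hempty || intros; apply ZtL_empty, Hempty).
    nra.
Qed.

End Spectrum.

Theorem theorem1 (alpha c : R) (h hb : nat -> R) (n : nat -> nat) (bL bR : R) :
  0 < alpha <= 1 ->
  cft_spectrum c h hb n ->
  in_D alpha bL bR ->
  exists (N : nat) (pts : nat -> R * R),
    alg_run alpha bL bR N pts /\
    (forall i, (1 <= i < N)%nat -> 4 * PI ^ 2 < fst (pts i) * snd (pts i)) /\
    2 * PI < fst (pts N) /\ 2 * PI < snd (pts N) /\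
    Eerr c h hb n bL bR <=
      ln (sum1 (fun i => ZtL c h hb n alpha (fst (pts i)) (snd (pts i))) N
          + ZtH c h hb n alpha (fst (pts N)) (snd (pts N))).
Proof.
  intros Ha Hspec HD.
  destruct (in_D_pos alpha bL bR HD) as [HL HR].
  destruct (runs_from_D alpha bL bR Ha HD) as (N & pts & Hstart & Hrun).
  pose proof (Eerr_le_run c h hb n Hspec alpha bL bR N pts Ha HL HR Hstart Hrun) as HE.
  destruct Hrun as (HN & Hsteps & Hstop).
  exists N, pts. split; [|split; [|split; [|split]]].
  - split; [exact HN|]. split; [exact Hstart|]. split; [|exact Hstop].
    intros i Hi. destruct (Hsteps i Hi) as [(Hns & _) Hstep]. auto.
  - intros i Hi. apply (Hsteps i Hi).
  - apply Hstop.
  - apply Hstop.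
  - exact HE.
Qed.
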